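(* Assume that $(a,b,c)\in\mathcal A_{\mathbf k}$. Then \[ b_1\geq p-1-(a+(k_1-1)c), \qquad b_s\geq (k_{s-1}-k_s+1)c-1, \quad s=2,\dots,n. \]
   Context: Let $p$ be an odd prime. Let $\mathbf k=(k_1,\dots,k_n)\in\mathbb Z_{>0}^n$ with $k_i>k_{i+1}$ for $i=1,\dots,n-1$, and set $k_0=k_{n+1}=0$. Let $a,b_1,\dots,b_n,c\in\mathbb Z_{>0}$, $b=(b_1,\dots,b_n)$, and put $a_1=a$, $a_2=\dots=a_n=0$; $\delta_{s,1}$ is $1$ if $s=1$ and $0$ otherwise. Define \[ R_{\mathbf k}(a,b,c)=\prod_{1\le s\le r\le n}\prod_{i=1}^{k_r-k_{r+1}}\frac{(r-s+b_s+\dots+b_r+(i+s-r-1)c)!}{(r-s+1+a_s+b_s+\dots+b_r+(i+s-r+k_s-k_{s-1}-2)c-\delta_{s,1}p)!} \] \[ \times(-1)^{\sum_{i=1}^n k_i}\Big(\prod_{i=1}^{k_1}(a_1+(i-1)c)!\Big)\Big(\prod_{r=1}^n\prod_{i=1}^{k_r}\frac{(ic)!}{c!}\Big)\Big(\prod_{r=2}^n\prod_{i=1}^{k_r}(p+(i-k_{r-1}-1)c)!\Big). \] The tuple $(a,b_1,\dots,b_n,c)$ is called admissible if $a+(k_1-1)c<p-1$ and for every factorial $x!$ appearing in the right-hand side of the formula for $R_{\mathbf k}(a,b,c)$ one has $0\le x<p$. The set of all admissible $(a,b,c)$ is denoted $\mathcal A_{\mathbf k}$. *)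

From mathcomp Require Import all_boot all_order all_algebra.
Set Implicit Arguments. Unset Strict Implicit. Unset Printing Implicit Defensive.
Import Order.TTheory GRing.Theory Num.Theory.
Local Open Scope ring_scope.

(* k = [:: k_1; ...; k_n], b = [:: b_1; ...; b_n]  (n = size k) *)
(* kk k i = k_i for 1 <= i <= n, and k_0 = k_(n+1) = 0 *)
Definition kk (k : seq nat) (i : nat) : nat :=
  if i == 0%N then 0%N else nth 0%N k i.-1.
Definition bb (b : seq nat) (i : nat) : nat := nth 0%N b i.-1.
Definition aa (a s : nat) : nat := if s == 1%N then a else 0%N.
Definition bsum (b : seq nat) (s r : nat) : nat := (\sum_(s <= j < r.+1) bb b j)%N.

(* argument of the numerator factorial, indexed by s, r, i *)
Definition numarg (k b : seq nat) (c s r i : nat) : int :=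
  (r%:Z - s%:Z) + (bsum b s r)%:Z + (i%:Z + s%:Z - r%:Z - 1) * c%:Z.

(* argument of the denominator factorial, indexed by s, r, i *)
Definition denarg (p : nat) (k b : seq nat) (a c s r i : nat) : int :=
  (r%:Z - s%:Z + 1) + (aa a s)%:Z + (bsum b s r)%:Z
  + (i%:Z + s%:Z - r%:Z + (kk k s)%:Z - (kk k s.-1)%:Z - 2) * c%:Z
  - (if s == 1%N then p else 0%N)%:Z.

Definition inrange (p : nat) (x : int) : bool := (0 <= x) && (x < p%:Z).

(* (a, b, c) in A_k : the condition a + (k_1 - 1) c < p - 1 and every
   factorial x! occurring in the formula for R_k(a,b,c) has 0 <= x < p *)
Definition admissible (p : nat) (k b : seq nat) (a c : nat) : Prop :=
  let n := size k in
  [/\ a%:Z + ((kk k 1)%:Z - 1) * c%:Z < p%:Z - 1,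
   (forall s r i : nat, (1 <= s)%N -> (s <= r)%N -> (r <= n)%N ->
      (1 <= i)%N -> (i <= kk k r - kk k r.+1)%N ->
      inrange p (numarg k b c s r i) && inrange p (denarg p k b a c s r i)),
   (forall i : nat, (1 <= i <= kk k 1)%N ->
      inrange p (a%:Z + (i%:Z - 1) * c%:Z)),
   (forall r i : nat, (1 <= r <= n)%N -> (1 <= i <= kk k r)%N ->
      inrange p (i%:Z * c%:Z) && inrange p c%:Z) &
   (forall r i : nat, (2 <= r <= n)%N -> (1 <= i <= kk k r)%N ->
      inrange p (p%:Z + (i%:Z - (kk k r.-1)%:Z - 1) * c%:Z))].

(* Take r = s and i = 1 in the denominator factorials of R_k(a,b,c): this is
   allowed because k is strictly decreasing with k_(n+1) = 0, so
   k_s - k_(s+1) >= 1.  Admissibility makes the argument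
   1 + a_s + b_s + (k_s - k_(s-1) - 1) c - [s = 1] p nonnegative, which is
   the claimed lower bound on b_s (with k_0 = 0 when s = 1). *)
From mathcomp Require Import all_boot all_order all_algebra.
From mathcomp Require Import zify.
Import Order.TTheory GRing.Theory Num.Theory.
Local Open Scope ring_scope.

Lemma kk_succ_lt (k : seq nat) (s : nat) :
  all (fun x => 0 < x)%N k -> sorted (fun x y => y < x)%N k ->
  (0 < s <= size k)%N -> (kk k s.+1 < kk k s)%N.
Proof.
case: s => [//|s] k_pos k_sorted /andP[_ s_lt]; rewrite /kk /=.
have [s1_lt | s1_ge] := ltnP s.+1 (size k).
  apply: (sorted_ltn_nth _ 0%N k_sorted) => //.
  by move=> y x z xy yz; apply: ltn_trans yz xy.
by rewrite nth_default //; apply: (allP k_pos); apply: mem_nth.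
Qed.

Lemma denarg_diag1 (p : nat) (k b : seq nat) (a c s : nat) :
  denarg p k b a c s s 1 =
  (aa a s)%:Z + (bb b s)%:Z + 1
  - ((kk k s.-1)%:Z - (kk k s)%:Z + 1) * c%:Z - (if s == 1%N then p else 0%N)%:Z.
Proof. rewrite /denarg /bsum big_nat1; lia. Qed.

Lemma admissible_denarg_diag1_ge0 (p : nat) (k b : seq nat) (a c s : nat) :
  all (fun x => 0 < x)%N k -> sorted (fun x y => y < x)%N k ->
  admissible p k b a c -> (0 < s <= size k)%N ->
  0 <= denarg p k b a c s s 1.
Proof.
move=> k_pos k_sorted [_ fact_range _ _ _] /andP[s_gt0 s_le].
have one_le : (1 <= kk k s - kk k s.+1)%N.
  by rewrite subn_gt0 kk_succ_lt // s_gt0.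
by case/andP: (fact_range s s 1%N s_gt0 (leqnn s) s_le (leqnn 1) one_le)
  => _ /andP[].
Qed.

Theorem lemma3p2 (p : nat) (k b : seq nat) (a c : nat) :
  prime p -> odd p ->
  (0 < size k)%N ->
  all (fun x => 0 < x)%N k ->
  sorted (fun x y => y < x)%N k ->
  size b = size k ->
  all (fun x => 0 < x)%N b ->
  (0 < a)%N -> (0 < c)%N ->
  admissible p k b a c ->
  (p%:Z - 1 - (a%:Z + ((kk k 1)%:Z - 1) * c%:Z) <= (bb b 1)%:Z) /\
  (forall s : nat, (2 <= s <= size k)%N ->
     ((kk k s.-1)%:Z - (kk k s)%:Z + 1) * c%:Z - 1 <= (bb b s)%:Z).
Proof.
move=> _ _ size_k_gt0 k_pos k_sorted _ _ _ _ adm.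
have diag_ge0 s := admissible_denarg_diag1_ge0 p k b a c s k_pos k_sorted adm.
split.
  by have := diag_ge0 1%N; rewrite size_k_gt0 denarg_diag1 /aa /kk /=; lia.
move=> s /andP[s_ge2 s_le].
have := diag_ge0 s; rewrite s_le (ltnW s_ge2) denarg_diag1 /aa.
have -> : (s == 1%N) = false by apply/eqP; lia.
lia.
Qed.
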